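(* Let $\mathcal{M}=(S,P,E,s_{init},L)$ be a CTMC, $\varepsilon,\delta\geq0$, and $q\geq\max_{s\in S}E(s)$. If $s\sim^{\mathcal{M}}_{\varepsilon,\delta}s'$, then $s\sim_{\tau}s'$ in the uniformization $\mathcal{M}_q$ of $\mathcal{M}$ with respect to $q$, where $\tau=e^{\delta}(1+\varepsilon)-1$.
   Context: A CTMC $(S,P,E,s_{init},L)$: finite $S$, $P\colon S\to\mathrm{Distr}(S)$ ($P(s,A)=\sum_{a\in A}P(s,a)$), $E\colon S\to\mathbb{R}_{>0}$, initial state, labeling $L$. For $R\subseteq S\times S$, $R(A)=\{t\mid\exists a\in A:(a,t)\in R\}$. A reflexive symmetric $R$ is an $(\varepsilon,\delta)$-bisimulation on $\mathcal{M}$ if for all $(s,s')\in R$: $L(s)=L(s')$, $|\ln E(s)-\ln E(s')|\leq\delta$, and $P(s,A)\leq P(s',R(A))+\varepsilon$ for all $A\subseteq S$; $s\sim^{\mathcal{M}}_{\varepsilon,\delta}s'$ if some such relation contains $(s,s')$. The uniformization $\mathcal{M}_q$ is the DTMC $(S,\overline{P},s_{init},L)$ with $\overline{P}(s,s')=P(s,s')E(s)/q$ for $s\neq s'$ and $\overline{P}(s,s)=1+P(s,s)E(s)/q-E(s)/q$. For a DTMC $(S,\overline{P},s_{init},L)$ and $\tau\geq0$, a reflexive symmetric $R\subseteq S\times S$ is a $\tau$-bisimulation if for all $(s,t)\in R$: $L(s)=L(t)$ and $\overline{P}(s,A)\leq\overline{P}(t,R(A))+\tau$ for all $A\subseteq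 S$; $s\sim_\tau t$ if some $\tau$-bisimulation contains $(s,t)$. *)

From mathcomp Require Import all_boot all_order all_algebra.
From mathcomp Require Import all_classical all_reals all_analysis.
Set Implicit Arguments. Unset Strict Implicit. Unset Printing Implicit Defensive.
Import Order.TTheory GRing.Theory Num.Theory.
Local Open Scope ring_scope.

Definition is_distr (R : realType) (S : finType) (mu : S -> R) : Prop :=
  (forall s, 0 <= mu s) /\ \sum_(s : S) mu s = 1.

Record CTMC (R : realType) (S : finType) (Lab : eqType) := {
  ctP : S -> S -> R;
  ctP_distr : forall s, is_distr (ctP s);
  ctE : S -> R;
  ctE_pos : forall s, 0 < ctE s;
  ct_init : S;
  ctL : S -> Lab }.

Record DTMC (R : realType) (S : finType) (Lab : eqType) := {
  dtP : S -> S -> R;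
  dt_init : S;
  dtL : S -> Lab }.

Definition probset (R : realType) (S : finType) (P : S -> S -> R)
  (s : S) (A : {set S}) : R := \sum_(a in A) P s a.

Definition rel_image (S : finType) (Rl : rel S) (A : {set S}) : {set S} :=
  [set t | [exists a in A, Rl a t]].

Definition reflexive_symmetric (S : finType) (Rl : rel S) : Prop :=
  (forall s, Rl s s) /\ (forall s t, Rl s t -> Rl t s).

Definition ed_bisimulation (R : realType) (S : finType) (Lab : eqType)
  (M : CTMC R S Lab) (eps delta : R) (Rl : rel S) : Prop :=
  reflexive_symmetric Rl /\
  forall s s', Rl s s' ->
    [/\ ctL M s = ctL M s',
        `| ln (ctE M s) - ln (ctE M s') | <= delta &
        forall A : {set S},
          probset (ctP M) s A <= probset (ctP M) s' (rel_image Rl A) + eps].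

Definition ed_bisimilar (R : realType) (S : finType) (Lab : eqType)
  (M : CTMC R S Lab) (eps delta : R) (s s' : S) : Prop :=
  exists Rl : rel S, ed_bisimulation M eps delta Rl /\ Rl s s'.

Definition unifP (R : realType) (S : finType) (Lab : eqType)
  (M : CTMC R S Lab) (q : R) (s s' : S) : R :=
  if s == s' then 1 + ctP M s s * ctE M s / q - ctE M s / q
  else ctP M s s' * ctE M s / q.

Definition uniformization (R : realType) (S : finType) (Lab : eqType)
  (M : CTMC R S Lab) (q : R) : DTMC R S Lab :=
  {| dtP := unifP M q; dt_init := ct_init M; dtL := ctL M |}.

Definition tau_bisimulation (R : realType) (S : finType) (Lab : eqType)
  (D : DTMC R S Lab) (tau : R) (Rl : rel S) : Prop :=
  reflexive_symmetric Rl /\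
  forall s t, Rl s t ->
    dtL D s = dtL D t /\
    forall A : {set S},
      probset (dtP D) s A <= probset (dtP D) t (rel_image Rl A) + tau.

Definition tau_bisimilar (R : realType) (S : finType) (Lab : eqType)
  (D : DTMC R S Lab) (tau : R) (s t : S) : Prop :=
  exists Rl : rel S, tau_bisimulation D tau Rl /\ Rl s t.

(* Write [a = E(x)/q], [b = E(y)/q] for related states [x], [y]; then [a, b] lie
   in [(0, 1]] and differ by a factor at most [e^delta].  Uniformization moves the
   mass [1 - a] to [x] itself and scales every other transition by [a].  If
   [x \notin A], then [P'(x, A) = a P(x, A) <= a (P(y, R(A)) + eps)], and trading
   [a] for [e^delta b] costs at most [e^delta - 1 + e^delta eps = tau].  If
   [x \in A], apply this to [y] and the complement of [R(A)], which does not
   contain [y]; by symmetry of [R] its image lies inside the complement of [A],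
   and taking complements again gives the claim for [A]. *)
From mathcomp Require Import all_boot all_order all_algebra.
From mathcomp Require Import all_classical all_reals all_analysis.
From mathcomp Require Import ring lra.
Set Implicit Arguments. Unset Strict Implicit. Unset Printing Implicit Defensive.
Import Order.TTheory GRing.Theory Num.Theory.
Local Open Scope ring_scope.

Section Probset.
Variables (R : realType) (S : finType) (P : S -> S -> R) (s : S).

Lemma probset_ge0 (A : {set S}) :
  (forall t, 0 <= P s t) -> 0 <= probset P s A.
Proof. by move=> P_ge0; apply: sumr_ge0. Qed.

Lemma probset_subset (A B : {set S}) :
  (forall t, 0 <= P s t) -> A \subset B -> probset P s A <= probset P s B.
Proof.
move=> P_ge0 AB; rewrite /probset !(big_mkcond [in _]) /=.
apply: ler_sum => t _; case: ifPn => [/(fintype.subsetP AB)-> //|_].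
by case: ifP.
Qed.

Lemma probset_setT : probset P s [set: S] = \sum_t P s t.
Proof. by apply: eq_bigl => t; rewrite finset.in_setT. Qed.

Lemma probset_setC (A : {set S}) :
  is_distr (P s) -> probset P s (~: A) = 1 - probset P s A.
Proof.
move=> [_ <-]; rewrite /probset [X in _ = X - _](bigID [in A]) /= addrAC subrr add0r.
by apply: eq_bigl => t; rewrite inE.
Qed.

Lemma probset_le1 (A : {set S}) : is_distr (P s) -> probset P s A <= 1.
Proof.
move=> Pd; rewrite -subr_ge0 -probset_setC//; exact: probset_ge0 Pd.1.
Qed.

End Probset.

Section RelImage.
Variables (S : finType) (Rl : rel S).

Lemma mem_rel_image (A : {set S}) a t : a \in A -> Rl a t -> t \in rel_image Rl A.
Proof. by move=> aA Rat; rewrite inE; apply/existsP; exists a; rewrite aA. Qed.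

Lemma rel_image_setC_rel_image (A : {set S}) :
  (forall s t, Rl s t -> Rl t s) -> rel_image Rl (~: rel_image Rl A) \subset ~: A.
Proof.
move=> Rl_sym; apply/fintype.subsetP => t; rewrite inE => /existsP[u /andP[uB Rut]].
move: uB; rewrite !inE; apply: contra => tA.
by apply/existsP; exists t; rewrite tA Rl_sym.
Qed.

End RelImage.

Section Uniformization.
Variables (R : realType) (S : finType) (Lab : eqType).
Variables (M : CTMC R S Lab) (q : R).

Lemma probset_unifP s A :
  probset (unifP M q) s A =
  ctE M s / q * probset (ctP M) s A + (if s \in A then 1 - ctE M s / q else 0).
Proof.
rewrite /probset mulr_sumr; case: ifPn => sA; last first.
  rewrite addr0; apply: eq_bigr => t tA; rewrite /unifP.
  by case: eqP => [st|_]; [move: sA; rewrite st tA | ring].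
rewrite !(bigD1 s sA) /= /unifP eqxx.
under eq_bigr => t /andP[_ /negPf ts] do rewrite eq_sym ts -mulrA mulrC.
ring.
Qed.

Hypothesis E_le_q : forall s, ctE M s <= q.

Lemma rate_ratio_gt0 s : 0 < ctE M s / q.
Proof. by rewrite divr_gt0 ?ctE_pos// (lt_le_trans (ctE_pos M s)). Qed.

Lemma rate_ratio_le1 s : ctE M s / q <= 1.
Proof. by rewrite ler_pdivrMr ?mul1r// (lt_le_trans (ctE_pos M s)). Qed.

Lemma unifP_distr s : is_distr (unifP M q s).
Proof.
have [P_ge0 P_sum1] := ctP_distr M s.
have a_gt0 := rate_ratio_gt0 s; have a_le1 := rate_ratio_le1 s.
split; last first.
  by rewrite -probset_setT probset_unifP finset.in_setT probset_setT P_sum1 mulr1 addrC subrK.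
move=> t; rewrite /unifP -!mulrA.
have := mulr_ge0 (P_ge0 t) (ltW a_gt0); case: eqP => [<-|_]; lra.
Qed.

End Uniformization.

Lemma le_expR_mul_of_ln_dist (R : realType) (x y delta : R) :
  0 < x -> 0 < y -> `|ln x - ln y| <= delta -> x <= expR delta * y.
Proof.
move=> x_gt0 y_gt0; rewrite ler_norml => /andP[_ le_delta].
rewrite -(lnK x_gt0) -(lnK y_gt0) -expRD ler_expR; lra.
Qed.

Section EdBisimulation.
Variables (R : realType) (S : finType) (Lab : eqType) (M : CTMC R S Lab).
Variables (eps delta q : R) (Rl : rel S).
Hypotheses (eps_ge0 : 0 <= eps) (delta_ge0 : 0 <= delta).
Hypothesis E_le_q : forall s, ctE M s <= q.
Hypothesis Rl_bisim : ed_bisimulation M eps delta Rl.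

Let tau := expR delta * (1 + eps) - 1.

Lemma unifP_bisim_notin x y (A : {set S}) : Rl x y -> x \notin A ->
  probset (unifP M q) x A <= probset (unifP M q) y (rel_image Rl A) + tau.
Proof.
move=> Rxy xA; have [_ ln_le P_le] := Rl_bisim.2 x y Rxy.
rewrite !probset_unifP (negbTE xA) addr0.
set a := ctE M x / q; set b := ctE M y / q.
have a_gt0 : 0 < a := rate_ratio_gt0 E_le_q x.
have a_le1 : a <= 1 := rate_ratio_le1 E_le_q x.
have b_gt0 : 0 < b := rate_ratio_gt0 E_le_q y.
have b_le1 : b <= 1 := rate_ratio_le1 E_le_q y.
have a_le_b : a <= expR delta * b.
  by rewrite mulrA ler_wpM2r ?invr_ge0 ?le_expR_mul_of_ln_dist ?ctE_pos//
    (le_trans (ltW (ctE_pos M x)) (E_le_q x)).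
set X := probset _ x A; set Y := probset _ y _.
have e_ge1 : 1 <= expR delta by rewrite -expR0 ler_expR.
have Y_ge0 : 0 <= Y by apply: probset_ge0 (ctP_distr M y).1.
have Y_le1 : Y <= 1 by apply: probset_le1 (ctP_distr M y).
have X_le : X <= Y + eps := P_le A.
have stay_ge0 : 0 <= (if y \in rel_image Rl A then 1 - b else 0).
  by case: ifP; lra.
have aX_le : a * X <= expR delta * b * Y + eps.
  apply: (le_trans (ler_wpM2l (ltW a_gt0) X_le)); rewrite mulrDr.
  apply: lerD; first by rewrite ler_wpM2r.
  by rewrite ler_piMl.
have bY_le1 : b * Y <= 1 by rewrite mulr_ile1 // ltW.
have : (expR delta - 1) * (b * Y) <= expR delta - 1.
  by rewrite ler_piMr ?subr_ge0.
have : eps <= expR delta * eps by rewrite ler_peMl.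
rewrite /tau; lra.
Qed.

Lemma unifP_bisim x y (A : {set S}) : Rl x y ->
  probset (unifP M q) x A <= probset (unifP M q) y (rel_image Rl A) + tau.
Proof.
have [[_ Rl_sym] _] := Rl_bisim.
move=> Rxy; have [xA|] := boolP (x \in A); last exact: unifP_bisim_notin.
have yRA : y \notin ~: rel_image Rl A by rewrite inE negbK (mem_rel_image xA).
have Pd := unifP_distr E_le_q.
have := probset_subset (Pd x).1 (rel_image_setC_rel_image A Rl_sym).
have := unifP_bisim_notin (Rl_sym _ _ Rxy) yRA.
rewrite !probset_setC//; lra.
Qed.

Lemma ed_bisimulation_uniformization :
  tau_bisimulation (uniformization M q) tau Rl.
Proof.
have [Rl_rs HB] := Rl_bisim; split=> // x y Rxy.
have [L_eq _ _] := HB x y Rxy.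
by split=> [|A]; [exact: L_eq | exact: unifP_bisim].
Qed.

End EdBisimulation.

Theorem lemma2 (R : realType) (S : finType) (Lab : eqType)
  (M : CTMC R S Lab) (eps delta q : R) (s s' : S) :
  0 <= eps -> 0 <= delta ->
  (forall x : S, ctE M x <= q) ->
  ed_bisimilar M eps delta s s' ->
  tau_bisimilar (uniformization M q) (expR delta * (1 + eps) - 1) s s'.
Proof.
move=> eps_ge0 delta_ge0 E_le_q [Rl [Rl_bisim Rss']].
by exists Rl; split=> //; exact: ed_bisimulation_uniformization.
Qed.
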